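(* Let $M,N\ge1$ be integers, $\mathbf G\in\mathbb C^{N\times M}$, $\mathbf h_{\mathrm d}\in\mathbb C^M$, $\mathbf h_{\mathrm r}\in\mathbb C^N$, $P_0>0$, $\Gamma>0$, $\sigma^2>0$. For $\mathbf v\in\mathbb C^N$ let $\mathbf\Phi=\mathrm{diag}(\mathbf v)$ and $\mathbf h(\mathbf v)=\mathbf h_{\mathrm d}+\mathbf G^H\mathbf\Phi^H\mathbf h_{\mathrm r}$. For a positive semidefinite $\mathbf R\in\mathbb C^{M\times M}$ let $f(\mathbf R)=\mathrm{tr}\big((\mathbf G\mathbf R\mathbf G^H)^{-1}\big)$ when $\mathbf G\mathbf R\mathbf G^H$ is invertible, and $f(\mathbf R)=+\infty$ otherwise. Consider (single user, $K=1$): (P1): minimize $f(\mathbf w\mathbf w^H+\mathbf R_0)$ over $\mathbf w\in\mathbb C^M$, Hermitian $\mathbf R_0\in\mathbb C^{M\times M}$, and $\mathbf v\in\mathbb C^N$, subject to $\frac{|\mathbf h(\mathbf v)^H\mathbf w|^2}{\mathbf h(\mathbf v)^H\mathbf R_0\mathbf h(\mathbf v)+\sigma^2}\ge\Gamma$, $\|\mathbf w\|^2+\mathrm{tr}(\mathbf R_0)\le P_0$, $\mathbf R_0\succeq\mathbf 0$, and $|v_n|=1$ for all $n=1,\dots,N$; (P2): the same problem with the SINR constraint replaced by $\frac{|\mathbf h(\mathbf v)^H\mathbf w|^2}{\sigma^2}\ge\Gamma$. Then the optimal values of (P1) and (P2) are identical.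
   Context: Setting: an IRS-enabled integrated sensing and communication system with a base station of $M$ antennas, an IRS with $N$ unit-modulus reflecting elements (reflection vector $\mathbf v$), and one single-antenna user. $\mathbf h_{\mathrm d}^H$ is the base-station-to-user channel, $\mathbf h_{\mathrm r}^H$ the IRS-to-user channel, $\mathbf G$ the base-station-to-IRS channel, $\mathbf w$ the information beamformer, $\mathbf R_0$ the dedicated sensing-signal covariance. (P1) corresponds to a user that cannot cancel sensing-signal interference, (P2) to one that can. The objective is (up to a positive constant) the Cramér-Rao bound for estimating the target response matrix with respect to the IRS. *)

From HB Require Import structures.
From mathcomp Require Import all_boot all_order all_algebra.
From mathcomp Require Import complex.
From mathcomp Require Import reals constructive_ereal classical_sets ereal.
Set Implicit Arguments. Unset Strict Implicit. Unset Printing Implicit Defensive.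
Import Order.TTheory GRing.Theory Num.Theory.
Local Open Scope ring_scope.
Local Open Scope complex_scope.

Definition ctmx (R : rcfType) m n (A : 'M[R[i]]_(m, n)) : 'M[R[i]]_(n, m) :=
  (map_mx conjc A)^T.

Definition hermitian (R : rcfType) n (A : 'M[R[i]]_n) : Prop := ctmx A = A.

(* A >= 0 : x^H A x is real and nonnegative for every x *)
Definition psd (R : rcfType) n (A : 'M[R[i]]_n) : Prop :=
  forall x : 'cV[R[i]]_n, 0 <= (ctmx x *m A *m x) 0 0.

Definition heff (R : rcfType) M N (G : 'M[R[i]]_(N, M)) (hd : 'cV[R[i]]_M)
  (hr : 'cV[R[i]]_N) (v : 'cV[R[i]]_N) : 'cV[R[i]]_M :=
  hd + ctmx G *m ctmx (diag_mx v^T) *m hr.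

(* f(R) = tr((G R G^H)^{-1}) if G R G^H invertible, +oo otherwise.
   The trace of the inverse of the (Hermitian) matrix G R G^H is real;
   we take its real part to obtain an extended real value. *)
Definition crb (R : realType) M N (G : 'M[R[i]]_(N, M)) (Rx : 'M[R[i]]_M)
  : \bar R :=
  let A := G *m Rx *m ctmx G in
  if A \in unitmx then ((complex.Re (\tr (invmx A))))%:E else +oo%E.

Definition common_feasible (R : realType) M N (P0 : R)
  (w : 'cV[R[i]]_M) (R0 : 'M[R[i]]_M) (v : 'cV[R[i]]_N) : Prop :=
  [/\ hermitian R0,
      \sum_(i < M) `|w i 0| ^+ 2 + \tr R0 <= P0%:C,
      psd R0 &
      forall n : 'I_N, `|v n 0| = 1].

Definition feasible_P1 (R : realType) M N (G : 'M[R[i]]_(N, M))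
  (hd : 'cV[R[i]]_M) (hr : 'cV[R[i]]_N) (P0 Gam sigma2 : R)
  (w : 'cV[R[i]]_M) (R0 : 'M[R[i]]_M) (v : 'cV[R[i]]_N) : Prop :=
  let h := heff G hd hr v in
  Gam%:C <= `|(ctmx h *m w) 0 0| ^+ 2 / ((ctmx h *m R0 *m h) 0 0 + sigma2%:C)
  /\ common_feasible P0 w R0 v.

Definition feasible_P2 (R : realType) M N (G : 'M[R[i]]_(N, M))
  (hd : 'cV[R[i]]_M) (hr : 'cV[R[i]]_N) (P0 Gam sigma2 : R)
  (w : 'cV[R[i]]_M) (R0 : 'M[R[i]]_M) (v : 'cV[R[i]]_N) : Prop :=
  let h := heff G hd hr v in
  Gam%:C <= `|(ctmx h *m w) 0 0| ^+ 2 / sigma2%:C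
  /\ common_feasible P0 w R0 v.

Definition optval (R : realType) M N (G : 'M[R[i]]_(N, M))
  (feas : 'cV[R[i]]_M -> 'M[R[i]]_M -> 'cV[R[i]]_N -> Prop) : \bar R :=
  ereal_inf [set crb G (x.1.1 *m ctmx x.1.1 + x.1.2) | x in
      [set x : 'cV[R[i]]_M * 'M[R[i]]_M * 'cV[R[i]]_N | feas x.1.1 x.1.2 x.2]]%classic.

(* Every (P1)-feasible point is (P2)-feasible, since dropping the interference
   term only increases the SINR.  Conversely, let (w, R0, v) be
   (P2)-feasible, put Rx = w w^H + R0, h = h(v) and s = h^H Rx h, which is
   positive because s >= |h^H w|^2 >= Gamma sigma^2.  The realigned beamformer
   w' = Rx h / sqrt s and R0' = Rx - w' w'^H keep the transmit covariance, hence
   the power and the objective, while |h^H w'|^2 = s >= |h^H w|^2 and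
   h^H R0' h = 0, so the user sees no interference.  R0' is positive
   semidefinite because R0' = P^H Rx P for the projection P = I - h h^H Rx / s,
   which annihilates h.  So both problems minimise over the same set of
   objective values. *)

From Pilot Require Import Defs.
From HB Require Import structures.
From mathcomp Require Import all_boot all_order all_algebra.
From mathcomp Require Import complex.
From mathcomp Require Import reals constructive_ereal classical_sets ereal.
Set Implicit Arguments. Unset Strict Implicit. Unset Printing Implicit Defensive.
Import Order.TTheory GRing.Theory Num.Theory.
Local Open Scope ring_scope.
Local Open Scope complex_scope.

Section ConjugateTranspose.
Variable R : rcfType.
Local Notation C := R[i].

Lemma ctmxK m n (A : 'M[C]_(m, n)) : ctmx (ctmx A) = A.
Proof. by apply/matrixP => i j; rewrite /ctmx !mxE conjcK. Qed.

Lemma ctmx_mul m n p (A : 'M[C]_(m, n)) (B : 'M[C]_(n, p)) :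
  ctmx (A *m B) = ctmx B *m ctmx A.
Proof. by rewrite /ctmx map_mxM trmx_mul. Qed.

Lemma ctmxD m n (A B : 'M[C]_(m, n)) : ctmx (A + B) = ctmx A + ctmx B.
Proof. by apply/matrixP => i j; rewrite /ctmx !mxE rmorphD. Qed.

Lemma ctmxB m n (A B : 'M[C]_(m, n)) : ctmx (A - B) = ctmx A - ctmx B.
Proof. by apply/matrixP => i j; rewrite /ctmx !mxE rmorphB. Qed.

Lemma ctmxZ m n a (A : 'M[C]_(m, n)) : ctmx (a *: A) = conjc a *: ctmx A.
Proof. by apply/matrixP => i j; rewrite /ctmx !mxE rmorphM. Qed.

Lemma conjc_ge0 (x : C) : 0 <= x -> conjc x = x.
Proof. by move=> x_ge0; rewrite [x]complexE (ger0_Im x_ge0) mulr0 addr0 conjc_real. Qed.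

Lemma dotmxC n (u v : 'cV[C]_n) : (ctmx v *m u) 0 0 = conjc ((ctmx u *m v) 0 0).
Proof. by rewrite -{1}(ctmxK u) -ctmx_mul /ctmx !mxE. Qed.

Definition qform n (A : 'M[C]_n) (x : 'cV[C]_n) : C := (ctmx x *m A *m x) 0 0.

Lemma qform_outer n (w x : 'cV[C]_n) :
  qform (w *m ctmx w) x = `|(ctmx x *m w) 0 0| ^+ 2.
Proof.
by rewrite /qform !mulmxA -mulmxA mxE big_ord1 dotmxC sqr_normc conjcK.
Qed.

Lemma qform_outerD n (w : 'cV[C]_n) (A : 'M[C]_n) x :
  qform (w *m ctmx w + A) x = `|(ctmx x *m w) 0 0| ^+ 2 + qform A x.
Proof. by rewrite /qform mulmxDr mulmxDl mxE -qform_outer. Qed.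

Lemma mxtrace_outer n (w : 'cV[C]_n) :
  \tr (w *m ctmx w) = \sum_(i < n) `|w i 0| ^+ 2.
Proof.
by apply: eq_bigr => i _; rewrite mxE big_ord1 /ctmx !mxE sqr_normc.
Qed.

Lemma hermitian_outerD n (w : 'cV[C]_n) (A : 'M[C]_n) :
  Defs.hermitian A -> Defs.hermitian (w *m ctmx w + A).
Proof. by rewrite /Defs.hermitian ctmxD ctmx_mul ctmxK => ->. Qed.

Lemma psd_outerD n (w : 'cV[C]_n) (A : 'M[C]_n) :
  psd A -> psd (w *m ctmx w + A).
Proof.
move=> A_psd x; change (0 <= qform (w *m ctmx w + A) x).
by rewrite qform_outerD addr_ge0 ?exprn_ge0 ?A_psd.
Qed.

Lemma psd_congr n (P A : 'M[C]_n) : psd A -> psd (ctmx P *m A *m P).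
Proof.
by move=> A_psd x; have := A_psd (P *m x); rewrite ctmx_mul !mulmxA.
Qed.

End ConjugateTranspose.

Section Realignment.
Variables (R : rcfType) (n : nat) (Rx : 'M[R[i]]_n) (h : 'cV[R[i]]_n).
Hypotheses (Rx_herm : Defs.hermitian Rx) (Rx_psd : psd Rx).
Local Notation s := (qform Rx h).
Hypothesis s_gt0 : 0 < s.

Let u : 'cV[R[i]]_n := Rx *m h.
Let w' : 'cV[R[i]]_n := (sqrtc s)^-1 *: u.
Let P : 'M[R[i]]_n := 1%:M - s^-1 *: (h *m ctmx u).

Let s_neq0 : s != 0. Proof. by rewrite gt_eqF. Qed.

Let conjc_invs : conjc s^-1 = s^-1.
Proof. by rewrite conjc_ge0 // invr_ge0 ltW. Qed.

Let invsqrt_ge0 : 0 <= (sqrtc s)^-1.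
Proof. by rewrite invr_ge0 sqrtc_ge0 ltW. Qed.

Let ctmx_u : ctmx u = ctmx h *m Rx.
Proof. by rewrite ctmx_mul Rx_herm. Qed.

Let ctmx_u_h : ctmx u *m h = s%:M.
Proof. by rewrite ctmx_u; exact: mx11_scalar. Qed.

Let outer_w' : w' *m ctmx w' = s^-1 *: (u *m ctmx u).
Proof.
rewrite ctmxZ conjc_ge0 // -scalemxAl -scalemxAr scalerA -expr2 exprVn.
by rewrite sqr_sqrtc.
Qed.

Let P_h : P *m h = 0.
Proof.
rewrite mulmxBl mul1mx -scalemxAl -mulmxA ctmx_u_h mul_mx_scalar.
by rewrite scalerA mulVf // scale1r subrr.
Qed.

Let Rx_P : Rx *m P = Rx - s^-1 *: (u *m ctmx u).
Proof. by rewrite mulmxBr mulmx1 -scalemxAr mulmxA. Qed.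

Let ctmx_u_P : ctmx u *m P = 0.
Proof.
rewrite mulmxBr mulmx1 -scalemxAr mulmxA ctmx_u_h mul_scalar_mx scalerA.
by rewrite mulVf // scale1r subrr.
Qed.

Let congr_P : ctmx P *m Rx *m P = Rx - w' *m ctmx w'.
Proof.
have P_Rx : ctmx P *m Rx = Rx - s^-1 *: (u *m ctmx u).
  rewrite -[ctmx P *m Rx]ctmxK ctmx_mul ctmxK Rx_herm Rx_P.
  by rewrite ctmxB ctmxZ conjc_invs ctmx_mul ctmxK Rx_herm.
rewrite P_Rx mulmxBl Rx_P -scalemxAl -(mulmxA u) ctmx_u_P mulmx0 scaler0 subr0.
by rewrite outer_w'.
Qed.

Lemma realign_beamformer :
  exists (w : 'cV[R[i]]_n) (R0 : 'M[R[i]]_n),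
    [/\ Defs.hermitian R0, psd R0, qform R0 h = 0,
        `|(ctmx h *m w) 0 0| ^+ 2 = s & w *m ctmx w + R0 = Rx].
Proof.
exists w', (Rx - w' *m ctmx w'); split.
- by rewrite /Defs.hermitian ctmxB Rx_herm ctmx_mul ctmxK.
- by rewrite -congr_P; exact: psd_congr.
- by rewrite -congr_P /qform !mulmxA -ctmx_mul -mulmxA P_h mulmx0 mxE.
- rewrite -scalemxAr mxE mulmxA ger0_norm ?mulr_ge0 ?(ltW s_gt0) //.
  by rewrite exprMn exprVn sqr_sqrtc expr2 mulKf.
- by rewrite addrC subrK.
Qed.

End Realignment.

Lemma eq_optval (R : realType) M N (G : 'M[R[i]]_(N, M))
    (feas1 feas2 : 'cV[R[i]]_M -> 'M[R[i]]_M -> 'cV[R[i]]_N -> Prop) :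
  (forall w R0 v, feas1 w R0 v -> feas2 w R0 v) ->
  (forall w R0 v, feas2 w R0 v -> exists w' R0' v',
     feas1 w' R0' v' /\ w' *m ctmx w' + R0' = w *m ctmx w + R0) ->
  optval G feas1 = optval G feas2.
Proof.
move=> feas12 feas21; rewrite /optval; congr ereal_inf.
apply/seteqP; split=> _ [[[w R0] v] /= feas_x <-].
  by exists (w, R0, v) => //; exact: feas12.
have [w' [R0' [v' [feas_x' cov_eq]]]] := feas21 _ _ _ feas_x.
by exists (w', R0', v') => //=; rewrite cov_eq.
Qed.

Section Feasibility.
Variables (R : realType) (M N : nat) (G : 'M[R[i]]_(N, M)).
Variables (hd : 'cV[R[i]]_M) (hr : 'cV[R[i]]_N) (P0 Gam sigma2 : R).
Hypotheses (Gam_gt0 : 0 < Gam) (sigma2_gt0 : 0 < sigma2).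

Let sigma2C_gt0 : 0 < sigma2%:C.
Proof. by rewrite ltcE /= eqxx sigma2_gt0. Qed.

Lemma feasible_P1_P2 w R0 v :
  feasible_P1 G hd hr P0 Gam sigma2 w R0 v ->
  feasible_P2 G hd hr P0 Gam sigma2 w R0 v.
Proof.
rewrite /feasible_P1 /feasible_P2 /=; set h := heff G hd hr v.
move=> [sinr_ge feas]; split=> //; apply: (le_trans sinr_ge).
have interf_ge0 : 0 <= (ctmx h *m R0 *m h) 0 0 by case: feas.
by rewrite ler_wpM2l ?exprn_ge0 // lef_pV2 ?posrE ?lerDr ?ltr_wpDl.
Qed.

Lemma feasible_P2_P1 w R0 v :
  feasible_P2 G hd hr P0 Gam sigma2 w R0 v ->
  exists w' R0' v', feasible_P1 G hd hr P0 Gam sigma2 w' R0' v' /\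
    w' *m ctmx w' + R0' = w *m ctmx w + R0.
Proof.
rewrite /feasible_P2 /=; set h := heff G hd hr v.
move=> [sinr_ge [R0_herm power R0_psd unimod]].
set Rx := w *m ctmx w + R0.
have gain_le : `|(ctmx h *m w) 0 0| ^+ 2 <= qform Rx h.
  by rewrite qform_outerD lerDl; exact: R0_psd.
have sinr_le : Gam%:C <= qform Rx h / sigma2%:C.
  have inv_ge0 : 0 <= sigma2%:C^-1 by rewrite invr_ge0 ltW.
  exact: le_trans sinr_ge (ler_wpM2r inv_ge0 gain_le).
have s_gt0 : 0 < qform Rx h.
  have GamC_gt0 : 0 < Gam%:C by rewrite ltcE /= eqxx Gam_gt0.
  by move: (lt_le_trans GamC_gt0 sinr_le); rewrite pmulr_lgt0 ?invr_gt0.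
have [w' [R0' [R0'_herm R0'_psd no_interf gain cov_eq]]] :=
  realign_beamformer (hermitian_outerD w R0_herm) (psd_outerD w R0_psd) s_gt0.
exists w', R0', v; split=> //; split.
  by rewrite -/h (_ : (ctmx h *m R0' *m h) 0 0 = 0) // add0r gain.
split=> //.
by rewrite -mxtrace_outer -mxtraceD cov_eq mxtraceD mxtrace_outer.
Qed.

End Feasibility.

Theorem proposition3 (R : realType) (M N : nat) (hM : (1 <= M)%N) (hN : (1 <= N)%N)
  (G : 'M[R[i]]_(N, M)) (hd : 'cV[R[i]]_M) (hr : 'cV[R[i]]_N)
  (P0 Gam sigma2 : R) (hP0 : 0 < P0) (hGam : 0 < Gam) (hsigma2 : 0 < sigma2) :
  optval G (feasible_P1 G hd hr P0 Gam sigma2)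
  = optval G (feasible_P2 G hd hr P0 Gam sigma2).
Proof.
apply: eq_optval; first exact: feasible_P1_P2.
exact: feasible_P2_P1.
Qed.
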